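(* Let $N,M$ be positive integers, let $\mathscr{A}\subset\mathscr{M}(N,M)$ and $\mathscr{B}\subset\mathscr{M}(M,N)$ be finite sets of real matrices, and let $\|\cdot\|$ be a submultiplicative norm on $\mathscr{M}(N,N)$. Suppose that for every sequence $\{A_n\}_{n\ge1}$ with $A_n\in\mathscr{A}$ there exists a sequence $\{B_n\}_{n\ge1}$ with $B_n\in\mathscr{B}$ such that $\|A_nB_n\cdots A_1B_1\|\to0$ as $n\to\infty$. Then there exist constants $C>0$ and $\lambda\in(0,1)$ such that for every sequence $\{A_n\in\mathscr{A}\}$ there is a sequence $\{B_n\in\mathscr{B}\}$ for which \[ \|A_nB_n\cdots A_1B_1\|\le C\lambda^n,\qquad n=1,2,\ldots. \]
   Context: $\mathscr{M}(p,q)$ denotes the space of $p\times q$ real matrices with the topology of elementwise convergence. A norm on $\mathscr{M}(N,N)$ is submultiplicative if $\|XY\|\le\|X\|\,\|Y\|$ for all $X,Y$. *)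

From HB Require Import structures.
From mathcomp Require Import all_boot all_order all_algebra.
From mathcomp Require Import all_classical all_reals all_analysis.
Set Implicit Arguments. Unset Strict Implicit. Unset Printing Implicit Defensive.
Import Order.TTheory GRing.Theory Num.Theory.
Import numFieldNormedType.Exports.
Local Open Scope ring_scope.

Definition submult_norm (R : realType) (N : nat) (nrm : 'M[R]_N -> R) : Prop :=
  [/\ (forall X, nrm X = 0 -> X = 0),
      (forall (c : R) X, nrm (c *: X) = `|c| * nrm X),
      (forall X Y, nrm (X + Y) <= nrm X + nrm Y)
    & (forall X Y, nrm (X *m Y) <= nrm X * nrm Y)].

(* prodAB a b n = A_n B_n ... A_1 B_1, where A_k = a (k-1), B_k = b (k-1);
   prodAB a b 0 is the identity matrix (empty product). *)
Fixpoint prodAB (R : realType) (N M : nat)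
  (a : nat -> 'M[R]_(N, M)) (b : nat -> 'M[R]_(M, N)) (n : nat) : 'M[R]_N :=
  match n with
  | 0 => 1%:M
  | k.+1 => (a k *m b k) *m prodAB a b k
  end.

From HB Require Import structures.
From mathcomp Require Import all_boot all_order all_algebra.
From mathcomp Require Import all_classical all_reals all_analysis.
From mathcomp Require Import zify.
Set Implicit Arguments. Unset Strict Implicit. Unset Printing Implicit Defensive.
Import Order.TTheory GRing.Theory Num.Theory.
Import numFieldNormedType.Exports.
Local Open Scope classical_set_scope.
Local Open Scope ring_scope.

(* A König-type compactness argument over the finite alphabet [As] turns the
   hypothesis into a uniform horizon [K]: for every sequence (A_n) some choice
   of B_1, ..., B_n with 0 < n <= K makes the product of norm at most 1/2.
   Applying this to the successive suffixes of (A_n) cuts the time axis into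
   blocks of length at most K, each contracting by 1/2, so the products decay
   like lam^n for any lam with lam^K >= 1/2. *)

Section KonigUniformBound.
Variables (T : eqType) (s : seq T) (good : nat -> (nat -> T) -> Prop).
Hypothesis good_mono : forall K K' a, (K <= K')%N -> good K a -> good K' a.
Hypothesis good_prefix : forall K a a',
  (forall i, (i < K)%N -> a i = a' i) -> good K a -> good K a'.

Definition upd (a : nat -> T) (k : nat) (x : T) : nat -> T :=
  fun i => if i == k then x else a i.

Definition bad_upto k a := (forall i, (i < k)%N -> a i \in s) /\ ~ good k a.

Definition extensible k a := forall K,
  exists2 a', (forall i, (i < k)%N -> a' i = a i) & bad_upto (k + K) a'.

Lemma bad_upto_le k k' a : (k' <= k)%N -> bad_upto k a -> bad_upto k' a.
Proof.
move=> le_k'k [a_s not_good]; split=> [i lt_ik'|]; first by apply: a_s; lia.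
by move/(good_mono le_k'k).
Qed.

Lemma extensible_agree k a a' :
  (forall i, (i < k)%N -> a i = a' i) -> extensible k a -> extensible k a'.
Proof.
move=> agree ext K; have [a'' agree'' bad''] := ext K.
by exists a'' => // i lt_ik; rewrite agree'' ?agree.
Qed.

Lemma extensible_step k a :
  extensible k a -> exists2 x, x \in s & extensible k.+1 (upd a k x).
Proof.
move=> ext; apply: contrapT => no_x.
have /choice [K hK] : forall x, exists K, x \in s -> ~ exists2 a',
    (forall i, (i < k.+1)%N -> a' i = upd a k x i) & bad_upto (k.+1 + K) a'.
  move=> x; case: (pselect (extensible k.+1 (upd a k x))) => [ext_x|].
    by exists 0%N => xs; case: no_x; exists x.
  by move=> /existsNP[K not_ext]; exists K.
have [a' agree [a's not_good]] := ext (\max_(x <- s) K x).+1.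
have xs : a' k \in s by apply: a's; lia.
apply: (hK _ xs); exists a'.
  move=> i; rewrite ltnS leq_eqVlt /upd => /predU1P[-> | lt_ik].
    by rewrite eqxx.
  by rewrite ltn_eqF ?agree.
apply: bad_upto_le (conj a's not_good).
by rewrite addSnnS leq_add2l ltnS leq_bigmax_seq.
Qed.

Lemma extensible_branch a0 : extensible 0 a0 ->
  exists2 a, (forall i, a i \in s) & forall k, extensible k a.
Proof.
move=> ext0.
have /choice [F hF] : forall ka : nat * (nat -> T), exists x,
    extensible ka.1 ka.2 -> x \in s /\ extensible ka.1.+1 (upd ka.2 ka.1 x).
  case=> k a; case: (pselect (extensible k a)) => [/extensible_step[x xs ext]|].
    by exists x.
  by exists (a k).
pose fix path k : nat -> T :=
  if k is k'.+1 then upd (path k') k' (F (k', path k')) else a0.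
have ext_path k : extensible k (path k).
  by elim: k => // k IH; exact: (hF (k, path k) IH).2.
have path_stable k i : (i < k)%N -> path k i = F (i, path i).
  elim: k => // k IH; rewrite ltnS leq_eqVlt /= /upd => /predU1P[-> | lt_ik].
    by rewrite eqxx.
  by rewrite ltn_eqF ?IH.
exists (fun i => F (i, path i)) => [i | k].
  exact: (hF (i, path i) (ext_path i)).1.
exact: extensible_agree (path_stable k) (ext_path k).
Qed.

Lemma konig_uniform_bound :
  (forall a, (forall i, a i \in s) -> exists K, good K a) ->
  exists K, forall a, (forall i, a i \in s) -> good K a.
Proof.
move=> bar; apply: contrapT => not_uniform.
have bad K : exists a, bad_upto K a.
  apply: contrapT => no_bad; apply: not_uniform; exists K => a a_s.
  by apply: contrapT => not_good; apply: no_bad; exists a; split.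
have [a0 _] := bad 0%N.
have [a a_s ext_a] : exists2 a, (forall i, a i \in s) &
    forall k, extensible k a.
  by apply: (@extensible_branch a0) => K; have [a' bad_a'] := bad K; exists a'.
have [K good_a] := bar a a_s.
have [a' agree [_]] := ext_a K 0%N; rewrite addn0; apply.
by apply: good_prefix good_a => i lt_iK; rewrite agree.
Qed.

End KonigUniformBound.

Section SubmultNorm.
Variables (R : realType) (N : nat) (nrm : 'M[R]_N -> R).
Hypothesis hnrm : submult_norm nrm.

Lemma submult_norm_ge0 X : 0 <= nrm X.
Proof.
case: hnrm => _ nrmZ nrmD _.
have nrm0 : nrm 0 = 0 by rewrite -(scale0r X) nrmZ normr0 mul0r.
have nrmN : nrm (- X) = nrm X by rewrite -scaleN1r nrmZ normrN normr1 mul1r.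
by have := nrmD X (- X); rewrite subrr nrm0 nrmN -mulr2n pmulrn_lge0.
Qed.

Lemma submult_norm_gt0 X : X != 0 -> 0 < nrm X.
Proof.
case: hnrm => nrm_eq0 _ _ _ nzX; rewrite lt_def submult_norm_ge0 andbT.
by apply: contraNN nzX => /eqP/nrm_eq0/eqP.
Qed.

Lemma submult_norm1_gt0 : (0 < N)%N -> 0 < nrm 1%:M.
Proof.
move=> N_gt0; apply: submult_norm_gt0; apply/eqP.
move=> /matrixP/(_ (Ordinal N_gt0) (Ordinal N_gt0))/eqP.
by rewrite !mxE eqxx /= oner_eq0.
Qed.

Lemma submult_normM X Y : nrm (X *m Y) <= nrm X * nrm Y.
Proof. by case: hnrm. Qed.

End SubmultNorm.

Definition shiftn (T : Type) (m : nat) (u : nat -> T) : nat -> T :=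
  fun i => u (m + i)%N.

Section ProdAB.
Variables (R : realType) (N M : nat).
Implicit Types (a : nat -> 'M[R]_(N, M)) (b : nat -> 'M[R]_(M, N)).

Lemma eq_prodAB a a' b b' n :
  (forall i, (i < n)%N -> a i = a' i) -> (forall i, (i < n)%N -> b i = b' i) ->
  prodAB a b n = prodAB a' b' n.
Proof.
elim: n => //= n IH eq_a eq_b.
by rewrite eq_a // eq_b // IH // => i /leqW; [exact: eq_a | exact: eq_b].
Qed.

Lemma prodABD a b m n :
  prodAB a b (m + n) = prodAB (shiftn m a) (shiftn m b) n *m prodAB a b m.
Proof. by elim: n => [|n IH]; rewrite ?addn0 ?mul1mx // addnS /= IH mulmxA. Qed.

Lemma norm_prodAB_mulmx_le (nrm : 'M[R]_N -> R) a b (c : R) Q m :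
  submult_norm nrm -> 0 <= c -> (forall i, nrm (a i *m b i) <= c) ->
  nrm (prodAB a b m *m Q) <= c ^+ m * nrm Q.
Proof.
move=> hnrm c_ge0 step_le; elim: m => [|m IH] /=.
  by rewrite mul1mx expr0 mul1r.
rewrite -mulmxA exprS -mulrA; apply: le_trans (submult_normM hnrm _ _) _.
by apply: ler_pM; rewrite ?submult_norm_ge0.
Qed.

End ProdAB.

Section BlockStart.
Variable len : nat -> nat.
Hypothesis len_gt0 : forall t, (0 < len t)%N.

(* Blocks start at 0 and the block starting at [t] covers [t, t + len t). *)
Fixpoint block_start (i : nat) : nat :=
  if i is i'.+1 then
    let t := block_start i' in if (i < t + len t)%N then t else i
  else 0.

Lemma block_startS i : block_start i.+1 =
  let t := block_start i in if (i.+1 < t + len t)%N then t else i.+1.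
Proof. by []. Qed.

Lemma block_start_le i : (block_start i <= i)%N.
Proof. by elim: i => //= i IH; case: ifP => // _; exact: leqW. Qed.

Lemma block_start_lt i : (i < block_start i + len (block_start i))%N.
Proof.
elim: i => [|i IH]; first exact: len_gt0.
by rewrite block_startS /=; case: ifP => // _; rewrite -addn1 leq_add2l.
Qed.

Lemma block_start_stable n j :
  (block_start n <= j <= n)%N -> block_start j = block_start n.
Proof.
elim: n => [|n IH] /andP[le_tj le_jn].
  by move: le_jn; rewrite leqn0 => /eqP->.
move: le_tj; rewrite block_startS /=; case: ifP => in_block le_tj.
  move: le_jn; rewrite leq_eqVlt => /predU1P[->|lt_jn].
    by rewrite block_startS /= in_block.
  by apply: IH; rewrite le_tj.
have -> : j = n.+1 by apply/eqP; rewrite eqn_leq le_jn le_tj.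
by rewrite block_startS /= in_block.
Qed.

End BlockStart.

Section BlockConcatenation.
Variables (R : realType) (N M : nat) (nrm : 'M[R]_N -> R).
Hypothesis hnrm : submult_norm nrm.
Variables (a : nat -> 'M[R]_(N, M)) (bb : nat -> nat -> 'M[R]_(M, N)).
Variables (len : nat -> nat) (lam : R).
Hypothesis len_gt0 : forall t, (0 < len t)%N.
Hypothesis block_contracts :
  forall t, nrm (prodAB (shiftn t a) (bb t) (len t)) <= lam ^+ len t.

Local Notation st := (block_start len).

Definition concat_blocks (i : nat) : 'M[R]_(M, N) := bb (st i) (i - st i).

Lemma prodAB_concat_blocks n k : (st n + k <= n.+1)%N ->
  prodAB a concat_blocks (st n + k) =
  prodAB (shiftn (st n) a) (bb (st n)) k *m prodAB a concat_blocks (st n).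
Proof.
move=> le_kn; rewrite prodABD; congr (_ *m _); apply: eq_prodAB => // i lt_ik.
rewrite /shiftn /concat_blocks (@block_start_stable len n) ?addKn //.
by rewrite leq_addr /=; lia.
Qed.

Lemma norm_prodAB_block_start n :
  nrm (prodAB a concat_blocks (st n)) <= nrm 1%:M * lam ^+ st n.
Proof.
elim: n => [|n IH]; first by rewrite /= expr0 mulr1.
rewrite block_startS /=; case: ifPn => [// | not_in_block].
have end_block : n.+1 = (st n + len (st n))%N.
  by apply/eqP; rewrite eqn_leq block_start_lt // leqNgt not_in_block.
rewrite end_block [in lam ^+ _]addnC exprD mulrCA.
rewrite prodAB_concat_blocks -?end_block //.
apply: le_trans (submult_normM hnrm _ _) _.
by apply: ler_pM; rewrite ?submult_norm_ge0 ?block_contracts.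
Qed.

Lemma norm_prodAB_concat_blocks (c : R) (K : nat) n :
  0 < lam -> lam <= 1 -> 1 <= c -> (forall t, (len t <= K)%N) ->
  (forall t i, nrm (a (t + i)%N *m bb t i) <= c) ->
  nrm (prodAB a concat_blocks n) <= c ^+ K * nrm 1%:M / lam ^+ K * lam ^+ n.
Proof.
move=> lam_gt0 lam_le1 c_ge1 len_le step_le.
have lam_ge0 := ltW lam_gt0; have c_ge0 := le_trans ler01 c_ge1.
have le_tn := @block_start_le len n.
have le_nK : (n - st n <= K)%N.
  by apply: leq_trans (len_le (st n)); have := block_start_lt len_gt0 n; lia.
have split_n : prodAB a concat_blocks n = prodAB (shiftn (st n) a) (bb (st n))
    (n - st n) *m prodAB a concat_blocks (st n).
  by rewrite -prodAB_concat_blocks subnKC ?leqnSn.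
have decay : lam ^+ st n <= (lam ^+ K)^-1 * lam ^+ n.
  rewrite ler_pdivlMl ?exprn_gt0 // -[in lam ^+ n](subnKC le_tn) exprD mulrC.
  by rewrite ler_wpM2l ?exprn_ge0 ?ler_wiXn2l.
rewrite split_n.
apply: le_trans (norm_prodAB_mulmx_le _ _ hnrm c_ge0 (step_le (st n))) _.
rewrite -!mulrA; apply: ler_pM; rewrite ?exprn_ge0 ?submult_norm_ge0 //.
  exact: ler_weXn2l.
apply: le_trans (norm_prodAB_block_start n) _.
by rewrite ler_wpM2l ?submult_norm_ge0.
Qed.

End BlockConcatenation.

Lemma exists_pow_ge (R : realType) (x : R) (K : nat) :
  0 < x < 1 -> exists2 lam : R, 0 < lam < 1 & x <= lam ^+ K.
Proof.
case/andP=> x_gt0 x_lt1; pose lam := x `^ (K.+1%:R)^-1.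
have lam_gt0 : 0 < lam by rewrite powR_gt0.
have lamSK : lam ^+ K.+1 = x.
  by rewrite -powR_mulrn ?powR_ge0 // -powRrM mulVf ?powRr1 ?ltW ?pnatr_eq0.
have lam_lt1 : lam < 1.
  by rewrite ltNge; apply/negP => /(exprn_ege1 K.+1); rewrite lamSK leNgt x_lt1.
exists lam; first by rewrite lam_gt0.
by rewrite -lamSK exprS ler_piMl ?exprn_ge0 ?ltW.
Qed.

Lemma uniform_contraction (R : realType) (N M : nat)
    (As : seq 'M[R]_(N, M)) (Bs : seq 'M[R]_(M, N)) (nrm : 'M[R]_N -> R)
    (eps : R) : 0 < eps ->
  (forall a : nat -> 'M[R]_(N, M), (forall n, a n \in As) ->
     exists b : nat -> 'M[R]_(M, N), (forall n, b n \in Bs) /\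
       (nrm (prodAB a b n) @[n --> \oo] --> (0 : R))) ->
  exists K, forall a, (forall i, a i \in As) ->
    exists2 b, (forall i, b i \in Bs) &
      exists2 n, (0 < n <= K)%N & nrm (prodAB a b n) <= eps.
Proof.
move=> eps_gt0 hyp; apply: konig_uniform_bound.
- move=> K K' a le_KK' [b Bb [n /andP[n_gt0 le_nK] small]].
  by exists b => //; exists n; rewrite ?n_gt0 ?(leq_trans le_nK).
- move=> K a a' agree [b Bb [n /andP[n_gt0 le_nK] small]].
  exists b => //; exists n; rewrite ?n_gt0 //.
  rewrite -(@eq_prodAB _ _ _ a a' b b) // => i lt_in.
  by apply: agree; exact: leq_trans lt_in le_nK.
- move=> a Aa; have [b [Bb cvg0]] := hyp a Aa.
  have [n0 _ small] := cvgr_lt 0 cvg0 _ eps_gt0.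
  exists n0.+1, b => //; exists n0.+1; first by rewrite leqnn.
  by apply/ltW/small; rewrite /= leqnSn.
Qed.

Theorem theorem1 (R : realType) (N M : nat) (hN : (0 < N)%N) (hM : (0 < M)%N)
  (As : seq 'M[R]_(N, M)) (Bs : seq 'M[R]_(M, N)) (nrm : 'M[R]_N -> R)
  (hnrm : submult_norm nrm)
  (hyp : forall a : nat -> 'M[R]_(N, M), (forall n, a n \in As) ->
     exists b : nat -> 'M[R]_(M, N), (forall n, b n \in Bs) /\
       (nrm (prodAB a b n) @[n --> \oo] --> (0 : R))) :
  exists (C lam : R), 0 < C /\ 0 < lam < 1 /\
    forall a : nat -> 'M[R]_(N, M), (forall n, a n \in As) ->
      exists b : nat -> 'M[R]_(M, N), (forall n, b n \in Bs) /\
        forall n : nat, (0 < n)%N -> nrm (prodAB a b n) <= C * lam ^+ n.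
Proof.
have id_gt0 := submult_norm1_gt0 hnrm hN.
pose c := \big[Order.max/1]_(X <- allpairs (@mulmx R N M N) As Bs) nrm X.
have c_ge1 : 1 <= c by exact: bigmax_ge_id.
have c_bound A B : A \in As -> B \in Bs -> nrm (A *m B) <= c.
  by move=> AA BB; apply: le_bigmax_seq => //; exact: allpairs_f.
have half_gt0 : 0 < 2^-1 :> R by rewrite invr_gt0.
have [K uniform] := uniform_contraction half_gt0 hyp.
have [lam /andP[lam_gt0 lam_lt1] half_le] : exists2 lam : R,
    0 < lam < 1 & 2^-1 <= lam ^+ K.
  by apply: exists_pow_ge; rewrite half_gt0 invf_lt1 ?ltr1n.
exists (c ^+ K * nrm 1%:M / lam ^+ K), lam; split.
  by rewrite divr_gt0 ?mulr_gt0 ?exprn_gt0 // (lt_le_trans ltr01 c_ge1).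
split=> [|a Aa]; first by rewrite lam_gt0.
have /choice [p hp] : forall t, exists p : (nat -> 'M[R]_(M, N)) * nat,
    [/\ forall i, p.1 i \in Bs, (0 < p.2 <= K)%N &
        nrm (prodAB (shiftn t a) p.1 p.2) <= 2^-1].
  move=> t; have [b Bb [n n_le small]] := uniform (shiftn t a) (fun i => Aa _).
  by exists (b, n).
pose bb t := (p t).1; pose len t := (p t).2.
have [bb_Bs len_gt0 len_le] : [/\ forall t i, bb t i \in Bs,
    forall t, (0 < len t)%N & forall t, (len t <= K)%N].
  by split=> t; have [? /andP[? ?] _] := hp t.
have contracts t : nrm (prodAB (shiftn t a) (bb t) (len t)) <= lam ^+ len t.
  have [_ _ small] := hp t.
  by apply: le_trans small (le_trans half_le _); rewrite ler_wiXn2l ?ltW.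
exists (concat_blocks bb len); split=> [i | n _]; first exact: bb_Bs.
apply: (norm_prodAB_concat_blocks hnrm len_gt0 contracts) => //.
  exact: ltW.
by move=> t i; apply: c_bound.
Qed.
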